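(* Let $k,\ell\ge1$, $\delta\in(0,1)$. Let $T^{hh}_{k,\ell}$ be the tree obtained from disjoint stars $S_k$ (hub $h_k$, leaves including $a$) and $S_\ell$ (hub $h_\ell$, leaves including $b$) by adding the edge $\{h_k,h_\ell\}$, with $\mathcal H$ its edge set and vertex set $V$. Let $S_m$, $m=k+\ell+1$, be a star with hub $h_m$, leaf $c$, $\mathcal H$ its edge set. Then the bargaining-power components (computed on the whole vertex sets) are $$b^{h_k}_{h_\ell}=\delta+\tfrac23(k+\ell)\delta^2+\tfrac{k\ell}{2}\delta^3\ \text{in }T^{hh}_{k,\ell},\qquad b^{h_m}_{c}=\delta+\tfrac23(k+\ell)\delta^2\ \text{in }S_m,$$ $$b^{h_k}_{a}=\delta+\tfrac{2k}{3}\delta^2+\tfrac{\ell}{2}\delta^3\ \text{in }T^{hh}_{k,\ell},\qquad b^{a}_{b}=\tfrac12\delta^3\ \text{in }T^{hh}_{k,\ell}.$$ In particular $b^{h_k}_{h_\ell}>b^{h_m}_c$, and $b^a_b<b^{h_k}_a$, $b^a_b<b^{h_k}_{h_\ell}$; so in private two-person conferences (no witnesses, $b_{\mathrm{eff}}=b^S_R$) the leaf–leaf conversation $\{a,b\}$ has weakly the most equilibrium partitions.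
   Context: For a finite simple undirected graph $G=(V,E)$ and $\delta\in(0,1)$: $v^G(S):=\sum_{i\in S}\sum_{j\in S,\,j\neq i}\delta^{t_{ij}(G[S])}$ for $S\subseteq V$, where $t_{ij}(G[S])$ is the distance in the induced subgraph ($\infty$ if disconnected, $\delta^\infty:=0$). For a conference structure $\mathcal H$ and $C\subseteq V$, $C/\mathcal H$ is the partition of $C$ into classes connected via chains of pairwise-intersecting members of $\mathcal H$ contained in $C$; $r^{v^G}_{\mathcal H}(C):=\sum_{B\in C/\mathcal H}v^G(B)$; for $X\subseteq V$, $\mathcal H|_X:=\{H\in\mathcal H:H\subseteq X\}$. $\mu_j(X;u)$ denotes the Shapley value of player $j$ in the TU game $u$ on player set $X$. Bargaining-power components: $b^j_i:=\mu_j(V;r^{v^G}_{\mathcal H})-\mu_j(V\setminus\{i\};r^{v^G}_{\mathcal H|_{V\setminus\{i\}}})$. For $b>0$, $N(b)$ denotes the unique integer $N\ge1$ with $\beta(N)\le b<\beta(N-1)$, where $\beta(N)=\frac1{2N(N+1)}$ and $\beta(0)=+\infty$; $N$ is non-increasing in $b$. *)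

From mathcomp Require Import all_boot all_order all_algebra.
Set Implicit Arguments. Unset Strict Implicit. Unset Printing Implicit Defensive.
Import Order.TTheory GRing.Theory Num.Theory.
Local Open Scope ring_scope.

Section Generic.
Variables (T : finType) (R : realFieldType).

(* G is given by an (intended symmetric, irreflexive) edge relation e. *)
Definition indrel (e : rel T) (S : {set T}) : rel T :=
  fun x y => [&& e x y, x \in S & y \in S].

Definition walkn (e : rel T) (S : {set T}) (i j : T) (n : nat) : bool :=
  [exists t : n.-tuple T, path (indrel e S) i t && (last i t == j)].

Lemma connect_walkn (e : rel T) (S : {set T}) (i j : T) :
  connect (indrel e S) i j -> exists n, walkn e S i j n.
Proof.
move=> /connectP [p pth ->]; exists (size p).
by apply/existsP; exists (in_tuple p); rewrite /= pth eqxx.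
Qed.

(* t_ij(G[S]) : Some d = the distance d, None = infinity (disconnected) *)
Definition dist (e : rel T) (S : {set T}) (i j : T) : option nat :=
  match connect (indrel e S) i j as b
        return connect (indrel e S) i j = b -> option nat with
  | true => fun h => Some (ex_minn (connect_walkn h))
  | false => fun _ => None
  end (erefl _).

Definition dpow (delta : R) (t : option nat) : R :=
  if t is Some d then delta ^+ d else 0.

Definition vG (e : rel T) (delta : R) (S : {set T}) : R :=
  \sum_(i in S) \sum_(j in S | j != i) dpow delta (dist e S i j).

Definition confin (Hs : {set {set T}}) (C : {set T}) : {set {set T}} :=
  [set H in Hs | H \subset C].

Definition overlap (Hs : {set {set T}}) (C : {set T}) : rel {set T} :=
  fun A B => [&& A \in confin Hs C, B \in confin Hs C & A :&: B != set0].

Definition linked (Hs : {set {set T}}) (C : {set T}) : rel T :=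
  fun i j => (i == j) ||
    [exists H1 in confin Hs C, exists H2 in confin Hs C,
       [&& i \in H1, j \in H2 & connect (overlap Hs C) H1 H2]].

Definition classes (Hs : {set {set T}}) (C : {set T}) : {set {set T}} :=
  equivalence_partition (linked Hs C) C.

Definition rgame (e : rel T) (delta : R) (Hs : {set {set T}}) (C : {set T}) : R :=
  \sum_(B in classes Hs C) vG e delta B.

Definition restr (Hs : {set {set T}}) (X : {set T}) : {set {set T}} :=
  [set H in Hs | H \subset X].

Definition shapley (X : {set T}) (u : {set T} -> R) (j : T) : R :=
  \sum_(S in powerset (X :\ j))
     ((#|S|)`!%:R * (#|X| - #|S| - 1)`!%:R / (#|X|)`!%:R) * (u (j |: S) - u S).

Definition bpc (e : rel T) (delta : R) (Hs : {set {set T}}) (j i : T) : R :=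
  shapley [set: T] (rgame e delta Hs) j
  - shapley ([set: T] :\ i) (rgame e delta (restr Hs ([set: T] :\ i))) j.

Definition edgeset (e : rel T) : {set {set T}} :=
  [set [set p.1; p.2] | p in [set p : T * T | e p.1 p.2]].

End Generic.

Definition betaN (R : realFieldType) (N : nat) : R := (2 * N * N.+1)%:R^-1.

(* isN b N  <->  N = N(b): N >= 1, beta(N) <= b < beta(N-1), beta(0) = +oo *)
Definition isN (R : realFieldType) (b : R) (N : nat) : Prop :=
  (1 <= N)%N /\ betaN R N <= b /\ (N = 1%N \/ b < betaN R N.-1).

(* T^{hh}_{k,l}: vertices (option 'I_k + option 'I_l); inl None = h_k,
   inr None = h_l, inl (Some _) the leaves of S_k, inr (Some _) those of S_l *)
Definition treeV (k l : nat) : finType := (option 'I_k + option 'I_l)%type.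

Definition treeE (k l : nat) : rel (treeV k l) :=
  fun x y => match x, y with
  | inl None, inl (Some _) | inl (Some _), inl None => true
  | inr None, inr (Some _) | inr (Some _), inr None => true
  | inl None, inr None | inr None, inl None => true
  | _, _ => false
  end.

(* star S_m: vertices option 'I_m, hub None, leaves Some _ *)
Definition starV (m : nat) : finType := option 'I_m.

Definition starE (m : nat) : rel (starV m) :=
  fun x y => match x, y with
  | None, Some _ | Some _, None => true
  | _, _ => false
  end.

Arguments treeE : clear implicits.
Arguments starE : clear implicits.

From mathcomp Require Import all_boot all_order all_algebra.
From mathcomp Require Import zify ring lra.
Set Implicit Arguments. Unset Strict Implicit. Unset Printing Implicit Defensive.
Import Order.TTheory GRing.Theory Num.Theory.
Local Open Scope ring_scope.

(* Every edge of the graph is a conference, so the conference classes of a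
   coalition C are unions of components of G[C] and r(C) = v^G(C).  In a tree
   the distance between x and y in G[C] is finite exactly when the path P_xy
   lies in C, so v^G is the combination of unanimity games
   sum_(x <> y) delta^d(x,y) u_(P_xy).  The Shapley value of u_P is 1/|P| on P
   and 0 off P, whatever the player set containing P, and deleting i removes
   exactly the u_P with i in P.  Hence b^j_i is the sum of delta^d/(d+1) over
   the ordered pairs at distance d whose path contains both i and j, which is
   a finite count in the two trees. *)

Section Distance.
Variables (T : finType) (e : rel T).

Lemma walkn_connect S i j n : walkn e S i j n -> connect (indrel e S) i j.
Proof. by case/existsP=> t /andP[p /eqP <-]; apply/connectP; exists t. Qed.

Lemma dist_some S i j d : walkn e S i j d ->
  (forall n, walkn e S i j n -> (d <= n)%N) -> dist e S i j = Some d.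
Proof.
move=> walk_d min_d; rewrite /dist; generalize (erefl (connect (indrel e S) i j)).
case: {2 3}(connect (indrel e S) i j) => conn; last by rewrite (walkn_connect walk_d) in conn.
case: ex_minnP => m walk_m min_m; congr Some.
by apply/eqP; rewrite eqn_leq min_m // min_d.
Qed.

Lemma dist_none S i j : (forall n, ~~ walkn e S i j n) -> dist e S i j = None.
Proof.
move=> no_walk; rewrite /dist; generalize (erefl (connect (indrel e S) i j)).
case: {2 3}(connect (indrel e S) i j) => conn //.
by case: (connect_walkn conn) => n walk_n; move: (no_walk n); rewrite walk_n.
Qed.

Lemma eq_dist S S' i j : (forall n, walkn e S i j n = walkn e S' i j n) ->
  dist e S i j = dist e S' i j.
Proof.
move=> eq_walk; have [conn|nconn] := boolP (connect (indrel e S) i j).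
  have [n walk_n] := connect_walkn conn.
  case: (ex_minnP (ex_intro _ n walk_n)) => m walk_m min_m.
  rewrite (dist_some walk_m min_m) (@dist_some S' i j m) -?eq_walk // => p.
  by rewrite -eq_walk; apply: min_m.
have no_walk n : ~~ walkn e S i j n by apply: contra nconn; apply: walkn_connect.
by rewrite !dist_none // => n; rewrite -?eq_walk.
Qed.

End Distance.

Section ConferenceClasses.
Variables (T : finType) (R : realFieldType) (e : rel T) (delta : R).
Variables (Hs : {set {set T}}) (C : {set T}).

Lemma overlap_sym : symmetric (overlap Hs C).
Proof. by move=> A B; rewrite /overlap andbCA setIC. Qed.

Lemma linked_sym : symmetric (linked Hs C).
Proof.
suff sub i j : linked Hs C i j -> linked Hs C j i by move=> i j; apply/idP/idP; apply: sub.
rewrite /linked eq_sym; case/orP=> [->//|/existsP[H1 /andP[H1C /existsP[H2 /andP[H2C]]]]].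
case/and3P=> iH1 jH2 H12; apply/orP; right; apply/existsP; exists H2; rewrite H2C.
apply/existsP; exists H1; rewrite H1C jH2 iH1 /=.
by rewrite (sym_connect_sym overlap_sym).
Qed.

Lemma linked_trans : transitive (linked Hs C).
Proof.
move=> j i k; rewrite /linked; case/orP=> [/eqP->//|].
case/existsP=> H1 /andP[H1C /existsP[H2 /andP[H2C /and3P[iH1 jH2 H12]]]].
case/orP=> [/eqP<-|]; first by apply/orP; right; apply/existsP; exists H1;
  rewrite H1C; apply/existsP; exists H2; rewrite H2C iH1 jH2.
case/existsP=> H3 /andP[H3C /existsP[H4 /andP[H4C /and3P[jH3 kH4 H34]]]].
apply/orP; right; apply/existsP; exists H1; rewrite H1C; apply/existsP; exists H4.
rewrite H4C iH1 kH4 /=; apply: connect_trans H12 _; apply: connect_trans H34.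
by apply: connect1; rewrite /overlap H2C H3C; apply/set0Pn; exists j; rewrite inE jH2.
Qed.

Lemma linked_equiv : {in C & &, equivalence_rel (linked Hs C)}.
Proof.
move=> x y z _ _ _; split; first by rewrite /linked eqxx.
by move=> xy; apply/idP/idP; [apply: linked_trans; rewrite linked_sym | apply: linked_trans].
Qed.

Lemma linked_pair u w : [set u; w] \in Hs -> u \in C -> w \in C -> linked Hs C u w.
Proof.
move=> uwHs uC wC; have uwC : [set u; w] \in confin Hs C.
  by rewrite inE uwHs; apply/subsetP=> x /set2P[]->.
apply/orP; right; apply/existsP; exists [set u; w]; rewrite uwC; apply/existsP.
by exists [set u; w]; rewrite uwC !inE !eqxx orbT connect0.
Qed.

Lemma mem_class B u w : B \in classes Hs C -> u \in B -> w \in C ->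
  (w \in B) = linked Hs C u w.
Proof.
case/imsetP=> x xC ->; rewrite !inE => /andP[uC xu] wC; rewrite wC /=.
by apply/idP/idP; apply: linked_trans; rewrite // linked_sym.
Qed.

Lemma class_sub B : B \in classes Hs C -> B \subset C.
Proof. by case/imsetP=> x xC ->; apply/subsetP=> y; rewrite inE => /andP[]. Qed.

Hypothesis edge_linked : forall u w, u \in C -> w \in C -> e u w -> linked Hs C u w.

Lemma path_class B i t : B \in classes Hs C -> i \in B ->
  path (indrel e C) i t -> path (indrel e B) i t && (last i t \in B).
Proof.
move=> CB; elim: t i => [|x t IH] i iB /=; first by rewrite iB.
case/andP=> /and3P[eix iC xC] pt.
have xB : x \in B by rewrite (mem_class CB iB xC) edge_linked.
by rewrite /indrel eix iB xB /= IH.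
Qed.

Lemma walkn_class B i j n : B \in classes Hs C -> i \in B -> j \in B ->
  walkn e C i j n = walkn e B i j n.
Proof.
move=> CB iB jB; apply: eq_existsb => t; apply: andb_id2r => _.
apply/idP/idP => [/(path_class CB iB)/andP[]//|]; apply: sub_path => x y /and3P[xy xB yB].
by rewrite /indrel xy !(subsetP (class_sub CB)).
Qed.

Lemma walkn_out_class B i j n : B \in classes Hs C -> i \in B -> j \notin B ->
  walkn e C i j n = false.
Proof.
move=> CB iB jB; apply/existsP=> -[t /andP[pt /eqP last_t]].
by case/andP: (path_class CB iB pt) => _; rewrite last_t (negbTE jB).
Qed.

Lemma rgame_vG : rgame e delta Hs C = vG e delta C.
Proof.
rewrite /rgame /vG (set_partition_big _ (equivalence_partitionP linked_equiv)).
apply: eq_bigr => B CB; apply: eq_bigr => i iB.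
rewrite big_mkcond [RHS]big_mkcond; apply: eq_bigr => j _.
have [jB|jB] := boolP (j \in B).
  rewrite (subsetP (class_sub CB)) //=; case: (j != i) => //.
  by congr (dpow _ _); apply: eq_dist => n; rewrite (walkn_class _ CB).
case: (boolP (j \in C)) => //= jC; case: (j != i) => //.
by rewrite dist_none // => n; rewrite (walkn_out_class _ CB).
Qed.

End ConferenceClasses.

Lemma edgeset_pair (T : finType) (e : rel T) u w : e u w -> [set u; w] \in edgeset e.
Proof. by move=> uw; apply/imsetP; exists (u, w); rewrite ?inE. Qed.

Section Shapley.
Variables (T : finType) (R : realFieldType).

Definition unanimity (P : {set T}) : {set T} -> R := fun S => (P \subset S)%:R.

Lemma eq_shapley (X : {set T}) (u u' : {set T} -> R) j : j \in X ->
  (forall S : {set T}, S \subset X -> u S = u' S) -> shapley X u j = shapley X u' j.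
Proof.
move=> jX eq_u; apply: eq_bigr => S; rewrite powersetE => SXj.
have SX : S \subset X := subset_trans SXj (subD1set _ _).
by rewrite !eq_u // subUset sub1set jX.
Qed.

Lemma shapley_sum (X : {set T}) (I : finType) (P : pred I) (u : I -> {set T} -> R) j :
  shapley X (fun S => \sum_(p | P p) u p S) j = \sum_(p | P p) shapley X (u p) j.
Proof. by rewrite /shapley exchange_big; apply: eq_bigr => S _; rewrite -sumrB mulr_sumr. Qed.

Lemma shapleyZ (X : {set T}) c (u : {set T} -> R) j :
  shapley X (fun S => c * u S) j = c * shapley X u j.
Proof. by rewrite /shapley mulr_sumr; apply: eq_bigr => S _; rewrite -mulrBr mulrCA. Qed.

Lemma shapley_null (X : {set T}) (u : {set T} -> R) j :
  (forall S : {set T}, u (j |: S) = u S) -> shapley X u j = 0.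
Proof. by move=> null_j; apply: big1 => S _; rewrite null_j subrr mulr0. Qed.

Lemma unanimity_null (P : {set T}) z S : z \notin P -> unanimity P (z |: S) = unanimity P S.
Proof.
move=> zP; rewrite /unanimity; suff -> : (P \subset z |: S) = (P \subset S) by [].
apply/idP/idP => [PzS|PS]; last exact: subset_trans PS (subsetUr _ _).
apply/subsetP=> x xP; move: (subsetP PzS x xP); rewrite !inE.
by case/orP=> // /eqP xz; move: zP; rewrite -xz xP.
Qed.

Lemma shapley_unanimity_out (X P : {set T}) j : j \in X -> ~~ (P \subset X) ->
  shapley X (unanimity P) j = 0.
Proof.
move=> jX PX; apply: big1 => S; rewrite powersetE => SXj.
have SX : S \subset X := subset_trans SXj (subD1set _ _).
have jSX : j |: S \subset X by rewrite subUset sub1set jX.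
have out (Y : {set T}) : Y \subset X -> (P \subset Y) = false.
  by move=> YX; apply: contraNF PX => PY; apply: subset_trans PY YX.
by rewrite /unanimity !out // subrr mulr0.
Qed.

Lemma sum_powersetD1 (A : {set T}) z (F : {set T} -> R) : z \in A ->
  \sum_(S in powerset A) F S =
  \sum_(S in powerset (A :\ z)) F S + \sum_(S in powerset (A :\ z)) F (z |: S).
Proof.
move=> zA; rewrite (bigID (fun S : {set T} => z \in S)) /= addrC; congr (_ + _).
  by apply: eq_bigl => S; rewrite !powersetE subsetD1; case: (z \in S); rewrite ?andbF ?andbT.
rewrite (reindex_onto (fun S => z |: S) (fun S => S :\ z)) /=; last first.
  by move=> S /andP[_ zS]; rewrite setD1K.
apply: eq_bigl => S; rewrite !powersetE setU11 andbT subsetD1 subUset sub1set zA /=.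
have -> : (z |: S) :\ z = S :\ z by apply/setP=> x; rewrite !inE; case: (x == z).
congr (_ && _); apply/eqP/idP => [<-|zS]; first by rewrite !inE eqxx.
by apply/setP => x; rewrite !inE; case: eqP => // ->; rewrite (negbTE zS).
Qed.

Definition shapley_weight (n s : nat) : R := s`!%:R * (n - s - 1)`!%:R / n`!%:R.

(* Adding a null player splits each Shapley weight in two. *)
Lemma shapley_weightS s r :
  shapley_weight (s + r + 2) s + shapley_weight (s + r + 2) s.+1 = shapley_weight (s + r + 1) s.
Proof.
rewrite /shapley_weight.
have -> : (s + r + 2 - s - 1 = r.+1)%N by lia.
have -> : (s + r + 2 - s.+1 - 1 = r)%N by lia.
have -> : (s + r + 1 - s - 1 = r)%N by lia.
have -> : (s + r + 2 = (s + r + 1).+1)%N by lia.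
rewrite (factS (s + r + 1)) (factS s) (factS r) !natrM.
have sum_succ : r.+1%:R + s.+1%:R = (s + r + 1).+1%:R :> R by rewrite -natrD; congr _%:R; lia.
have fact_neq0 : (s + r + 1)`!%:R != 0 :> R by rewrite pnatr_eq0 -lt0n fact_gt0.
have succ_neq0 : (s + r + 1).+1%:R != 0 :> R by rewrite pnatr_eq0.
move: sum_succ fact_neq0 succ_neq0.
move: (s + r + 1)`!%:R (s + r + 1).+1%:R r.+1%:R s.+1%:R s`!%:R r`!%:R.
by move=> c y x z a b <- c0 y0; field; rewrite c0 y0.
Qed.

Lemma shapley_delete_null (X : {set T}) (u : {set T} -> R) j z :
  j \in X -> z \in X -> z != j -> (forall S : {set T}, u (z |: S) = u S) ->
  shapley X u j = shapley (X :\ z) u j.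
Proof.
move=> jX zX zj null_z.
rewrite /shapley (@sum_powersetD1 (X :\ j) z); last by rewrite !inE zj zX.
have -> : (X :\ j) :\ z = (X :\ z) :\ j by rewrite setDDl setUC -setDDl.
rewrite -big_split /=; apply: eq_bigr => S; rewrite powersetE => SXzj.
have zS : z \notin S by apply/negP=> /(subsetP SXzj); rewrite !inE eqxx andbF.
rewrite cardsU1 zS setUCA !null_z -mulrDl; congr (_ * _).
have cardX : #|X| = #|X :\ z|.+1 by rewrite (cardsD1 z X) zX.
have cardXz : #|X :\ z| = #|(X :\ z) :\ j|.+1 by rewrite (cardsD1 j (X :\ z)) !inE eq_sym zj jX.
rewrite cardX cardXz.
have [r ->] : exists r, #|(X :\ z) :\ j| = (#|S| + r)%N.
  by exists (#|(X :\ z) :\ j| - #|S|)%N; rewrite subnKC // subset_leq_card.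
by rewrite add1n -[(_ + r).+2]addn2 -[(_ + r).+1]addn1 -!/(shapley_weight _ _) shapley_weightS.
Qed.

Lemma shapley_unanimity_self (P : {set T}) j : j \in P ->
  shapley P (unanimity P) j = #|P|%:R^-1.
Proof.
move=> jP; rewrite /shapley (bigD1 (P :\ j)) ?powersetE //= big1 ?addr0.
  rewrite /unanimity setD1K // subxx.
  have -> : (P \subset P :\ j) = false by apply/negbTE/subsetPn; exists j; rewrite ?inE ?eqxx.
  have -> : #|P| = #|P :\ j|.+1 by rewrite (cardsD1 j P) jP.
  rewrite subSnn subnn fact0 factS mulr1 subr0 mulr1 natrM invfM mulrCA mulfV ?mulr1 //.
  by rewrite pnatr_eq0 -lt0n fact_gt0.
move=> S /andP[]; rewrite powersetE => SPj SneqPj; rewrite /unanimity.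
have -> : (P \subset S) = false.
  by apply/negbTE/subsetPn; exists j => //; apply/negP=> /(subsetP SPj); rewrite !inE eqxx.
have -> : (P \subset j |: S) = false.
  apply/negbTE/negP=> PjS; move/negP: SneqPj; apply; rewrite eqEsubset SPj /=.
  by apply/subsetP=> x /setD1P[xj xP]; move: (subsetP PjS x xP); rewrite !inE (negbTE xj).
by rewrite subrr mulr0.
Qed.

(* The players of X outside P are null players of the unanimity game of P. *)
Lemma shapley_unanimity (X P : {set T}) j : P \subset X -> j \in P ->
  shapley X (unanimity P) j = #|P|%:R^-1.
Proof.
move: {2}#|X :\: P| (erefl #|X :\: P|) => n; elim: n X => [|n IH] X cardXP PX jP.
  suff -> : X = P by apply: shapley_unanimity_self.
  apply/eqP; rewrite eqEsubset PX andbT -setD_eq0 -cards_eq0; exact/eqP.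
have [z] : exists z, z \in X :\: P by apply/set0Pn; rewrite -cards_eq0 cardXP.
rewrite inE => /andP[zP zX]; have zj : z != j by apply: contraNneq zP => ->.
rewrite (@shapley_delete_null X _ j z (subsetP PX j jP) zX zj); last first.
  by move=> S; apply: unanimity_null.
apply: IH => //; last by apply/subsetP=> x xP; rewrite !inE (subsetP PX) // andbT;
  apply: contraNneq zP => <-.
have -> : (X :\ z) :\: P = (X :\: P) :\ z by rewrite setDDl setUC -setDDl.
by move: cardXP; rewrite (cardsD1 z (X :\: P)) !inE zP zX => -[].
Qed.

Lemma shapley_unanimity_notin (X P : {set T}) j : j \notin P ->
  shapley X (unanimity P) j = 0.
Proof. by move=> jP; apply: shapley_null => S; apply: unanimity_null. Qed.

End Shapley.

Section Separation.
Variables (T : finType) (e : rel T).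

Definition separates (z x y : T) : Prop :=
  exists Q : pred T, [/\ Q x, ~~ Q y & forall u w, u != z -> w != z -> e u w -> Q u -> Q w].

Lemma walk_separated (S : {set T}) z x y t : separates z x y -> z \notin S ->
  path (indrel e S) x t -> last x t != y.
Proof.
case=> Q [Qx Qy Q_closed] zS; elim: t x Qx => [|w t IH] x Qx /=.
  by move=> _; apply: contraNneq _ Qy => <-.
case/andP=> /and3P[xw xS wS]; apply: IH; apply: Q_closed xw Qx.
  by apply: contraNneq _ zS => <-.
by apply: contraNneq _ zS => <-.
Qed.

Lemma separates_pendant z x y : symmetric e -> x != y ->
  (forall w, e x w -> w = z) \/ (forall w, e y w -> w = z) -> separates z x y.
Proof.
move=> e_sym xy [x_pendant|y_pendant].
  exists (pred1 x); split=> //=; first by rewrite eq_sym.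
  by move=> u w _ wz uw /eqP ux; move: wz; rewrite (x_pendant w) ?eqxx // -ux.
exists (predC1 y); split=> //=; first by rewrite eqxx.
by move=> u w uz _ uw _; apply: contraNneq uz => wy; rewrite (y_pendant u) // -wy e_sym.
Qed.

End Separation.

(* [tpath x y] lists the vertices after [x] on a chosen x-y path.  The
   Lipschitz condition makes its length the distance, and the separation
   condition makes it the only route from x to y, as in a tree. *)
Section TreePaths.
Variables (T : finType) (R : realFieldType) (e : rel T) (delta : R).
Variable tpath : T -> T -> seq T.
Hypothesis tpath_path : forall x y, path e x (tpath x y).
Hypothesis tpath_last : forall x y, last x (tpath x y) = y.
Hypothesis tpath_uniq : forall x y, uniq (x :: tpath x y).
Hypothesis tpath_lipschitz : forall x u w, e u w -> (size (tpath x w) <= (size (tpath x u)).+1)%N.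
Hypothesis tpath_separates : forall x y z, z \in tpath x y -> z != y -> separates e z x y.

Definition tpath_set x y : {set T} := [set z in x :: tpath x y].

Lemma mem_tpath_set x y z : (z \in tpath_set x y) = (z \in x :: tpath x y).
Proof. exact: in_set. Qed.

Lemma card_tpath_set x y : #|tpath_set x y| = (size (tpath x y)).+1.
Proof. by rewrite cardsE; apply/card_uniqP. Qed.

Lemma tpath_set_l x y : x \in tpath_set x y.
Proof. by rewrite inE mem_head. Qed.

Lemma tpath_set_r x y : y \in tpath_set x y.
Proof. by rewrite inE -{1}(tpath_last x y) mem_last. Qed.

Lemma tpath_nil x : tpath x x = [::].
Proof.
have := tpath_uniq x x; have := tpath_last x x.
by case: (tpath x x) => //= y t <-; rewrite mem_last.
Qed.

Lemma walk_length_ge (S : {set T}) x0 x t : path (indrel e S) x t ->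
  (size (tpath x0 (last x t)) <= size (tpath x0 x) + size t)%N.
Proof.
elim: t x => [|y t IH] x /=; first by rewrite addn0.
case/andP=> /and3P[xy _ _] pt; apply: leq_trans (IH _ pt) _.
by rewrite addnS -addSn leq_add2r tpath_lipschitz.
Qed.

Lemma walk_mem (S : {set T}) x t : path (indrel e S) x t -> x \in S /\ last x t \in S \/ t = [::].
Proof.
case: t => [|y t] /=; first by right.
case/andP=> /and3P[_ xS yS] pt; left; split=> //.
by elim: t y yS pt => //= w t IH y _ /andP[/and3P[_ _ wS]]; apply: IH.
Qed.

Lemma dist_tpath (S : {set T}) x y : x != y ->
  dist e S x y = if tpath_set x y \subset S then Some (size (tpath x y)) else None.
Proof.
move=> xy; case: ifP => PS.
  apply: dist_some => [|n /existsP[t /andP[pt /eqP last_t]]].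
    apply/existsP; exists (in_tuple (tpath x y)); rewrite /= tpath_last eqxx andbT.
    apply: (@sub_in_path _ (mem S) e) (tpath_path x y); last first.
      by apply/allP=> z zt; apply: (subsetP PS); rewrite inE.
    by move=> u w uS wS uw; rewrite /indrel uw uS wS.
  by have := walk_length_ge x pt; rewrite last_t tpath_nil /= size_tuple.
apply: dist_none => n; apply/existsP=> -[t /andP[pt /eqP last_t]].
case: (walk_mem pt) => [[xS yS]|t0]; last by move: xy; rewrite -last_t t0 eqxx.
have [z zP zS] := subsetPn (negbT PS).
move: zP; rewrite inE in_cons => /predU1P[zx|zt]; first by move: zS; rewrite zx xS.
have zy : z != y by apply: contraNneq zS => ->; rewrite -last_t.
by move: (walk_separated (tpath_separates zt zy) zS pt); rewrite last_t eqxx.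
Qed.

Definition path_game (C : {set T}) : R :=
  \sum_x \sum_(y | y != x) delta ^+ size (tpath x y) * unanimity R (tpath_set x y) C.

Lemma vG_path_game C : vG e delta C = path_game C.
Proof.
rewrite /vG /path_game [LHS]big_mkcond; apply: eq_bigr => x _.
have [xC|xC] := boolP (x \in C); last first.
  rewrite big1 // => y _; rewrite /unanimity.
  case: (boolP (tpath_set x y \subset C)) => [PC|]; last by rewrite mulr0.
  by move: xC; rewrite (subsetP PC _ (tpath_set_l x y)).
rewrite big_mkcondl; apply: eq_bigr => y yx; rewrite /unanimity dist_tpath 1?eq_sym //.
have [PC|PC] := boolP (tpath_set x y \subset C).
  by rewrite (subsetP PC _ (tpath_set_r x y)) /= mulr1.
by case: (y \in C); rewrite mulr0.
Qed.

Lemma bpc_path_game j i : j != i -> bpc e delta (edgeset e) j i =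
  shapley [set: T] path_game j - shapley ([set: T] :\ i) path_game j.
Proof.
move=> ji; rewrite /bpc; congr (_ - _); apply: eq_shapley; rewrite ?inE ?ji // => S SX;
  rewrite rgame_vG ?vG_path_game // => u w uS wS uw; apply: linked_pair => //.
- exact: edgeset_pair.
- rewrite inE edgeset_pair //=; apply/subsetP=> x /set2P[]->; exact: (subsetP SX).
Qed.

Definition path_share (i j x y : T) : R :=
  if (y != x) && (i \in x :: tpath x y) && (j \in x :: tpath x y)
  then delta ^+ size (tpath x y) / (size (tpath x y)).+1%:R else 0.

Lemma bpc_tpath j i : j != i ->
  bpc e delta (edgeset e) j i = \sum_x \sum_y path_share i j x y.
Proof.
move=> ji; rewrite bpc_path_game // /path_game !shapley_sum -sumrB; apply: eq_bigr => x _.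
rewrite !shapley_sum -sumrB big_mkcond; apply: eq_bigr => y _.
rewrite /path_share; case: (y != x) => //=.
rewrite !shapleyZ -mulrBr -card_tpath_set -!mem_tpath_set.
have [jP|jP] := boolP (j \in tpath_set x y); last first.
  by rewrite andbF !shapley_unanimity_notin // subrr mulr0.
rewrite andbT shapley_unanimity ?subsetT //.
have [iP|iP] := boolP (i \in tpath_set x y).
  rewrite shapley_unanimity_out ?subr0 ?in_setD1 ?ji ?inE //.
  by apply/subsetPn; exists i; rewrite // in_setD1 eqxx.
rewrite shapley_unanimity ?subrr ?mulr0 //.
by apply/subsetP=> z zP; rewrite !inE andbT; apply: contraNneq iP => <-.
Qed.

End TreePaths.

Lemma big_option (R : Type) (idx : R) (op : Monoid.com_law idx) (I : finType)
    (F : option I -> R) :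
  \big[op/idx]_(i : option I) F i = op (F None) (\big[op/idx]_(i : I) F (Some i)).
Proof. by rewrite ![index_enum _]unlock [@Finite.enum in LHS]unlock /= big_cons big_map. Qed.

Section SumLemmas.
Variable R : realFieldType.

Lemma sum_if_eq (I : finType) (i0 : I) (F : I -> R) :
  \sum_i (if i == i0 then F i else 0) = F i0.
Proof. by rewrite -big_mkcond big_pred1_eq. Qed.

Lemma sum_if_eq2 (I J : finType) (i0 : I) (j0 : J) (c : R) :
  \sum_i \sum_j (if (i == i0) && (j == j0) then c else 0) = c.
Proof.
rewrite -[RHS](sum_if_eq i0 (fun=> c)); apply: eq_bigr => i _.
by case: (i == i0); [apply: (sum_if_eq j0 (fun=> c)) | apply: big1_eq].
Qed.

Lemma sum_neq_const (I : finType) (i0 : I) (c : R) :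
  \sum_(i | i != i0) c = c * #|I|.-1%:R.
Proof. by rewrite sumr_const cardC1 mulr_natr. Qed.

Lemma sum_const_ord n (c : R) : \sum_(i < n) c = c * n%:R.
Proof. by rewrite sumr_const card_ord mulr_natr. Qed.

End SumLemmas.

Section TwoStarTree.
Variables (k l : nat).
Local Notation V := (treeV k l).
Local Notation E := (treeE k l).

Definition tree_path (x y : V) : seq V :=
  match x, y with
  | inl None, inl None => [::]
  | inl None, inl (Some _) => [:: y]
  | inl (Some _), inl None => [:: y]
  | inl (Some a), inl (Some a') => if a == a' then [::] else [:: inl None; y]
  | inl None, inr None => [:: y]
  | inl None, inr (Some _) => [:: inr None; y]
  | inl (Some _), inr None => [:: inl None; y]
  | inl (Some _), inr (Some _) => [:: inl None; inr None; y]
  | inr None, inr None => [::]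
  | inr None, inr (Some _) => [:: y]
  | inr (Some _), inr None => [:: y]
  | inr (Some b), inr (Some b') => if b == b' then [::] else [:: inr None; y]
  | inr None, inl None => [:: y]
  | inr None, inl (Some _) => [:: inl None; y]
  | inr (Some _), inl None => [:: inr None; y]
  | inr (Some _), inl (Some _) => [:: inr None; inl None; y]
  end.

Lemma treeE_sym : symmetric E.
Proof. by case=> [[a|]|[a|]] [[b|]|[b|]]. Qed.

Lemma tree_path_path x y : path E x (tree_path x y).
Proof. by case: x => [[a|]|[a|]]; case: y => [[b|]|[b|]] //=; case: eqP. Qed.

Lemma tree_path_last x y : last x (tree_path x y) = y.
Proof. by case: x => [[a|]|[a|]]; case: y => [[b|]|[b|]] //=; case: eqP => // ->. Qed.

Lemma tree_path_uniq x y : uniq (x :: tree_path x y).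
Proof.
case: x => [[a|]|[a|]]; case: y => [[b|]|[b|]] //=; try case: eqP => //= ab;
  rewrite !inE /= ?andbT //.
all: by apply/eqP; case.
Qed.

Lemma tree_path_lipschitz x u w : E u w ->
  (size (tree_path x w) <= (size (tree_path x u)).+1)%N.
Proof.
case: x => [[a|]|[a|]]; case: u => [[b|]|[b|]]; case: w => [[c|]|[c|]] //=;
  repeat (case: eqP => //= ?).
Qed.

(* The tree has diameter 3, so an inner vertex of a path is the only
   neighbour of one of its ends. *)
Lemma tree_path_separates x y z : z \in tree_path x y -> z != y -> separates E z x y.
Proof.
move=> zt zy; apply: separates_pendant treeE_sym _ _.
  by apply: contraTneq zt => ->; rewrite (tpath_nil tree_path_last tree_path_uniq).
move: zt zy; case: z => [[c|]|[c|]]; case: x => [[a|]|[a|]]; case: y => [[b|]|[b|]];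
  rewrite /= ?inE; repeat (case: eqP => //= ?);
  try (by left; case=> [[?|]|[?|]]); try (by right; case=> [[?|]|[?|]]).
all: by rewrite !inE /= => /eqP.
Qed.

Variables (R : realFieldType) (delta : R).

Lemma sum_tree (F : V -> R) : \sum_x F x =
  F (inl None) + \sum_(a : 'I_k) F (inl (Some a))
  + (F (inr None) + \sum_(b : 'I_l) F (inr (Some b))).
Proof. by rewrite big_sumType /= !big_option. Qed.

Lemma sum_tree2 (F : V -> V -> R) : \sum_x \sum_y F x y =
  (F (inl None) (inl None) + \sum_(a : 'I_k) F (inl None) (inl (Some a)) +
   (F (inl None) (inr None) + \sum_(b : 'I_l) F (inl None) (inr (Some b)))) +
  \sum_(a0 : 'I_k) (F (inl (Some a0)) (inl None) + \sum_(a : 'I_k) F (inl (Some a0)) (inl (Some a)) +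
   (F (inl (Some a0)) (inr None) + \sum_(b : 'I_l) F (inl (Some a0)) (inr (Some b)))) +
  ((F (inr None) (inl None) + \sum_(a : 'I_k) F (inr None) (inl (Some a)) +
   (F (inr None) (inr None) + \sum_(b : 'I_l) F (inr None) (inr (Some b)))) +
  \sum_(b0 : 'I_l) (F (inr (Some b0)) (inl None) + \sum_(a : 'I_k) F (inr (Some b0)) (inl (Some a)) +
   (F (inr (Some b0)) (inr None) + \sum_(b : 'I_l) F (inr (Some b0)) (inr (Some b))))).
Proof.
rewrite sum_tree !sum_tree; congr (_ + _ + (_ + _)); apply: eq_bigr => a _; exact: sum_tree.
Qed.

Local Notation tree_share := (path_share delta tree_path).

Lemma bpc_tree j i : j != i ->
  bpc E delta (edgeset E) j i = \sum_x \sum_y tree_share i j x y.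
Proof.
exact: (bpc_tpath _ tree_path_path tree_path_last tree_path_uniq
                  tree_path_lipschitz tree_path_separates).
Qed.

Lemma eq_inlS (a b : 'I_k) : (inl (Some a) == inl (Some b) :> V) = (a == b).
Proof. by apply/eqP/eqP => [[]|->]. Qed.

Lemma eq_inrS (a b : 'I_l) : (inr (Some a) == inr (Some b) :> V) = (a == b).
Proof. by apply/eqP/eqP => [[]|->]. Qed.

Definition hubs_term (x y : V) : R :=
  match x, y with
  | inl None, inr None | inr None, inl None => delta ^+ 1 / 2%:R
  | inl None, inr (Some _) | inl (Some _), inr None
  | inr None, inl (Some _) | inr (Some _), inl None => delta ^+ 2 / 3%:R
  | inl (Some _), inr (Some _) | inr (Some _), inl (Some _) => delta ^+ 3 / 4%:R
  | _, _ => 0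
  end.

Lemma tree_share_hubs x y : tree_share (inr None) (inl None) x y = hubs_term x y.
Proof.
rewrite /path_share; case: x => [[a1|]|[a1|]]; case: y => [[b1|]|[b1|]];
  rewrite /= ?inE /= ?inE /= ?eq_inlS ?eq_inrS //=;
  repeat (case: eqP => //= ?); try congruence; rewrite ?inE /= ?andbF //.
Qed.

Lemma bpc_tree_hubs : bpc E delta (edgeset E) (inl None) (inr None) =
  delta + 2%:R / 3%:R * (k + l)%:R * delta ^+ 2 + (k * l)%:R / 2%:R * delta ^+ 3.
Proof.
rewrite bpc_tree // (eq_bigr (fun x => \sum_y hubs_term x y)); last first.
  by move=> x _; apply: eq_bigr => y _; apply: tree_share_hubs.
rewrite sum_tree2 /= !big1_eq ?add0r ?addr0 !sum_const_ord natrD natrM expr1.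
by field.
Qed.

Definition hub_leaf_term (a : 'I_k) (x y : V) : R :=
  match x, y with
  | inl None, inl (Some a') | inl (Some a'), inl None =>
      if a' == a then delta ^+ 1 / 2%:R else 0
  | inl (Some a1), inl (Some a2) =>
      if (a1 == a) (+) (a2 == a) then delta ^+ 2 / 3%:R else 0
  | inl (Some a'), inr None | inr None, inl (Some a') =>
      if a' == a then delta ^+ 2 / 3%:R else 0
  | inl (Some a'), inr (Some _) | inr (Some _), inl (Some a') =>
      if a' == a then delta ^+ 3 / 4%:R else 0
  | _, _ => 0
  end.

Lemma tree_share_hub_leaf a x y : tree_share (inl (Some a)) (inl None) x y = hub_leaf_term a x y.
Proof.
rewrite /path_share; case: x => [[a1|]|[a1|]]; case: y => [[b1|]|[b1|]];
  rewrite /= ?inE /= ?inE /= ?eq_inlS ?eq_inrS //=;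
  repeat (case: eqP => //= ?); try congruence; rewrite ?inE /= ?andbF ?eq_inlS //;
  case: eqP => //=; congruence.
Qed.

Lemma bpc_tree_hub_leaf (a : 'I_k) : bpc E delta (edgeset E) (inl None) (inl (Some a)) =
  delta + (2 * k)%:R / 3%:R * delta ^+ 2 + l%:R / 2%:R * delta ^+ 3.
Proof.
rewrite bpc_tree // (eq_bigr (fun x => \sum_y hub_leaf_term a x y)); last first.
  by move=> x _; apply: eq_bigr => y _; apply: tree_share_hub_leaf.
rewrite sum_tree2 /= !big1_eq ?add0r ?addr0 !sum_if_eq.
rewrite (bigD1 a) //= eqxx /=.
under [\sum_(i < k | i != a) _]eq_bigr => i /negbTE ia do
  rewrite ia /= sum_if_eq big1_eq add0r !addr0.
rewrite -big_mkcond /= !sum_neq_const !card_ord !sum_const_ord.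
have -> : k.-1%:R = k%:R - 1 :> R by rewrite -subn1 natrB //; case: (k) a => [[]|].
by rewrite natrM expr1; field.
Qed.

Definition leaves_term (a : 'I_k) (b : 'I_l) (x y : V) : R :=
  match x, y with
  | inl (Some a'), inr (Some b') | inr (Some b'), inl (Some a') =>
      if (a' == a) && (b' == b) then delta ^+ 3 / 4%:R else 0
  | _, _ => 0
  end.

Lemma tree_share_leaves a b x y :
  tree_share (inr (Some b)) (inl (Some a)) x y = leaves_term a b x y.
Proof.
rewrite /path_share; case: x => [[a1|]|[a1|]]; case: y => [[b1|]|[b1|]];
  rewrite /= ?inE /= ?inE /= ?eq_inlS ?eq_inrS //=;
  repeat (case: eqP => //= ?); try congruence; rewrite ?inE /= ?andbF //.
Qed.

Lemma bpc_tree_leaves (a : 'I_k) (b : 'I_l) :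
  bpc E delta (edgeset E) (inl (Some a)) (inr (Some b)) = 2%:R^-1 * delta ^+ 3.
Proof.
rewrite bpc_tree // (eq_bigr (fun x => \sum_y leaves_term a b x y)); last first.
  by move=> x _; apply: eq_bigr => y _; apply: tree_share_leaves.
rewrite sum_tree2 /= !big1_eq ?add0r ?addr0.
under eq_bigr => a0 _ do rewrite !add0r.
under [X in _ + X]eq_bigr => b0 _ do rewrite add0r addr0.
by rewrite [X in _ + X]exchange_big /= !sum_if_eq2; field.
Qed.

End TwoStarTree.

Section Star.
Variable m : nat.
Local Notation V := (starV m).
Local Notation E := (starE m).

Definition star_path (x y : V) : seq V :=
  match x, y with
  | None, None => [::]
  | None, Some _ | Some _, None => [:: y]
  | Some a, Some b => if a == b then [::] else [:: None; y]
  end.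

Lemma starE_sym : symmetric E.
Proof. by case=> [a|] [b|]. Qed.

Lemma star_path_path x y : path E x (star_path x y).
Proof. by case: x => [a|]; case: y => [b|] //=; case: eqP. Qed.

Lemma star_path_last x y : last x (star_path x y) = y.
Proof. by case: x => [a|]; case: y => [b|] //=; case: eqP => // ->. Qed.

Lemma star_path_uniq x y : uniq (x :: star_path x y).
Proof.
case: x => [a|]; case: y => [b|] //=; try case: eqP => //= ab; rewrite !inE /= ?andbT //.
by apply/eqP; case.
Qed.

Lemma star_path_lipschitz x u w : E u w ->
  (size (star_path x w) <= (size (star_path x u)).+1)%N.
Proof. by case: x => [a|]; case: u => [b|]; case: w => [c|] //=; repeat (case: eqP => //= ?). Qed.

Lemma star_path_separates x y z : z \in star_path x y -> z != y -> separates E z x y.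
Proof.
move=> zt zy; apply: separates_pendant starE_sym _ _.
  by apply: contraTneq zt => ->; rewrite (tpath_nil star_path_last star_path_uniq).
move: zt zy; case: z => [c|]; case: x => [a|]; case: y => [b|]; rewrite /= ?inE;
  repeat (case: eqP => //= ?); try (by left; case=> [?|]); try (by right; case=> [?|]).
all: by rewrite !inE /= => /eqP.
Qed.

Variables (R : realFieldType) (delta : R).

Local Notation star_share := (path_share delta star_path).

Lemma bpc_star j i : j != i ->
  bpc E delta (edgeset E) j i = \sum_x \sum_y star_share i j x y.
Proof.
exact: (bpc_tpath _ star_path_path star_path_last star_path_uniq
                  star_path_lipschitz star_path_separates).
Qed.

Lemma eq_Some (a b : 'I_m) : (Some a == Some b :> V) = (a == b).
Proof. by apply/eqP/eqP => [[]|->]. Qed.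

Definition star_hub_leaf_term (c : 'I_m) (x y : V) : R :=
  match x, y with
  | None, Some b | Some b, None => if b == c then delta ^+ 1 / 2%:R else 0
  | Some a, Some b => if (a == c) (+) (b == c) then delta ^+ 2 / 3%:R else 0
  | _, _ => 0
  end.

Lemma star_share_hub_leaf c x y : star_share (Some c) None x y = star_hub_leaf_term c x y.
Proof.
rewrite /path_share; case: x => [a1|]; case: y => [b1|]; rewrite /= ?inE /= ?inE /= ?eq_Some //=;
  repeat (case: eqP => //= ?); try congruence; rewrite ?inE /= ?andbF ?eq_Some //;
  case: eqP => //=; congruence.
Qed.

Lemma bpc_star_hub_leaf (c : 'I_m) : bpc E delta (edgeset E) None (Some c) =
  delta + 2%:R / 3%:R * m.-1%:R * delta ^+ 2.
Proof.
rewrite bpc_star // (eq_bigr (fun x => \sum_y star_hub_leaf_term c x y)); last first.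
  by move=> x _; apply: eq_bigr => y _; apply: star_share_hub_leaf.
rewrite !big_option /= add0r sum_if_eq.
under eq_bigr => a _ do rewrite big_option /=.
rewrite (bigD1 c) //= eqxx /=.
under [\sum_(i < m | i != c) _]eq_bigr => i /negbTE ic do rewrite ic /= sum_if_eq add0r.
by rewrite -big_mkcond /= !sum_neq_const !card_ord expr1; field.
Qed.

End Star.

Section Thresholds.
Variable R : realFieldType.

Lemma betaN_anti p q : (1 <= p)%N -> (p <= q)%N -> betaN R q <= betaN R p.
Proof.
move=> p1 pq; have q1 := leq_trans p1 pq.
rewrite /betaN lef_pV2 ?posrE ?ltr0n ?muln_gt0 ?p1 ?q1 //.
by rewrite ler_nat leq_mul // leq_mul.
Qed.

Lemma isN_anti (b1 b2 : R) N1 N2 : b1 < b2 -> isN b1 N1 -> isN b2 N2 -> (N2 <= N1)%N.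
Proof.
move=> b12 [N1_gt0 [beta_b1 _]] [N2_gt0 [_ b2_lt]]; rewrite leqNgt; apply/negP => N12.
case: b2_lt => [N2_1|b2_lt]; first by move: N12; rewrite N2_1 ltnS leqNgt N1_gt0.
have beta_le : betaN R N2.-1 <= betaN R N1.
  by rewrite betaN_anti // -ltnS prednK // (leq_trans N1_gt0 (ltnW N12)).
have := lt_trans b12 (lt_le_trans b2_lt (le_trans beta_le beta_b1)).
by rewrite ltxx.
Qed.

Lemma half_cube_lt (d X L : R) : 0 < d -> 0 <= X -> 1 <= L ->
  2%:R^-1 * d ^+ 3 < d + X + L / 2%:R * d ^+ 3.
Proof.
move=> d_gt0 X_ge0 L_ge1; have d3_ge0 : 0 <= d ^+ 3 by rewrite exprn_ge0 ?ltW.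
have : 2%:R^-1 * d ^+ 3 <= L / 2%:R * d ^+ 3 by apply: ler_wpM2r => //; lra.
by lra.
Qed.

End Thresholds.

Unset Implicit Arguments.

Theorem mainTheorem10 (R : realFieldType) (k l : nat) (delta : R) :
  (1 <= k)%N -> (1 <= l)%N -> 0 < delta < 1 ->
  forall (a : 'I_k) (b : 'I_l) (c : 'I_(k + l + 1)),
  let bT := bpc (treeE k l) delta (edgeset (treeE k l)) in
  let bS := bpc (starE (k + l + 1)) delta (edgeset (starE (k + l + 1))) in
  let hk : treeV k l := inl None in
  let hl : treeV k l := inr None in
  let va : treeV k l := inl (Some a) in
  let vb : treeV k l := inr (Some b) in
  let hm : starV (k + l + 1) := None in
  let vc : starV (k + l + 1) := Some c in
  [/\ bT hk hl = delta + 2%:R / 3%:R * (k + l)%:R * delta ^+ 2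
                 + (k * l)%:R / 2%:R * delta ^+ 3,
      bS hm vc = delta + 2%:R / 3%:R * (k + l)%:R * delta ^+ 2,
      bT hk va = delta + (2 * k)%:R / 3%:R * delta ^+ 2
                 + l%:R / 2%:R * delta ^+ 3,
      bT va vb = 2%:R^-1 * delta ^+ 3 &
      [/\ bS hm vc < bT hk hl, bT va vb < bT hk va, bT va vb < bT hk hl,
          (forall N1 N2 : nat, isN (bT va vb) N1 -> isN (bT hk va) N2 -> (N2 <= N1)%N) &
          (forall N1 N2 : nat, isN (bT va vb) N1 -> isN (bT hk hl) N2 -> (N2 <= N1)%N)]].
Proof.
move=> k_gt0 l_gt0 /andP[delta_gt0 _] a b c; cbv zeta.
rewrite bpc_tree_hubs bpc_tree_hub_leaf bpc_tree_leaves bpc_star_hub_leaf addn1 /=.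
have leaves_lt_hub_leaf : 2%:R^-1 * delta ^+ 3 <
    delta + (2 * k)%:R / 3%:R * delta ^+ 2 + l%:R / 2%:R * delta ^+ 3.
  by apply: half_cube_lt; rewrite ?ler1n // !mulr_ge0 ?invr_ge0 ?ler0n ?ltW.
have leaves_lt_hubs : 2%:R^-1 * delta ^+ 3 <
    delta + 2%:R / 3%:R * (k + l)%:R * delta ^+ 2 + (k * l)%:R / 2%:R * delta ^+ 3.
  by apply: half_cube_lt; rewrite ?ler1n ?muln_gt0 ?k_gt0 // !mulr_ge0 ?invr_ge0 ?ler0n ?ltW.
split=> //; split=> //; last 2 first.
- by move=> N1 N2; apply: isN_anti.
- by move=> N1 N2; apply: isN_anti.
by rewrite ltrDl !mulr_gt0 ?invr_gt0 ?exprn_gt0 ?ltr0n ?muln_gt0 ?k_gt0.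
Qed.
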